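(* Under the hypotheses of the standing setting below, let $(u,v)$ be a bounded, decaying, optimal integrable positive solution. Then $u(x)\simeq|x|^{-\frac{n-\beta\gamma}{\gamma-1}}$.
   Context: Standing setting: $n\ge3$, $\beta>0$, $\gamma>1$, $\beta\gamma<n$, $p,q>0$ with $q\ge p$, $pq>(\gamma-1)^2$, $\sigma_1,\sigma_2\in(-\beta\gamma,\infty)$ with $\sigma_1\le\sigma_2$, $q_0+p_0\le\frac{n-\beta\gamma}{\gamma-1}$ where $q_0=\frac{\beta\gamma(\gamma-1+q)+(\gamma-1)\sigma_1+\sigma_2 q}{pq-(\gamma-1)^2}$, $p_0=\frac{\beta\gamma(\gamma-1+p)+(\gamma-1)\sigma_2+\sigma_1 p}{pq-(\gamma-1)^2}$; $c_1,c_2$ are double bounded (i.e. $1/C\le c_i(x)\le C$ for some $C>0$), and $(u,v)$ is a positive solution (nonnegative $L^1_{loc}$ functions, positive, satisfying the equations a.e.) of $u(x)=c_1(x)W_{\beta,\gamma}(|y|^{\sigma_1}v^q)(x)$, $v(x)=c_2(x)W_{\beta,\gamma}(|y|^{\sigma_2}u^p)(x)$, where $W_{\beta,\gamma}(f)(x)=\int_0^\infty\Big(\frac{\int_{B_t(x)}f(y)\,dy}{t^{n-\beta\gamma}}\Big)^{\frac{1}{\gamma-1}}\frac{dt}{t}$. For positive $f$, $f(x)\simeq g(x)$ means $1/c\le f(x)/g(x)\le c$ for some $c>0$ and all sufficiently large $|x|$; decaying means $u\simeq|x|^{-\theta_1}$, $v\simeq|x|^{-\theta_2}$ for some $\theta_1,\theta_2>0$.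 Optimal integrable means $(u,v)\in L^r\times L^s$ for all $r>\frac{n(\gamma-1)}{n-\beta\gamma}$ and $s>\max\big\{\frac{n(\gamma-1)}{n-\beta\gamma},\frac{n(\gamma-1)}{p\frac{n-\beta\gamma}{\gamma-1}-(\beta\gamma+\sigma_2)}\big\}$. *)

From HB Require Import structures.
From mathcomp Require Import all_boot all_order all_algebra.
From mathcomp Require Import all_classical all_reals all_analysis.
Set Implicit Arguments. Unset Strict Implicit. Unset Printing Implicit Defensive.
Import Order.TTheory GRing.Theory Num.Theory.
Local Open Scope classical_set_scope.
Local Open Scope ring_scope.

Section Defs.
Variable R : realType.

Definition enorm (n : nat) (x : 'rV[R]_n) : R :=
  Num.sqrt (\sum_(i < n) x ord0 i ^+ 2).

Definition eball (n : nat) (x : 'rV[R]_n) (t : R) : set 'rV[R]_n :=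
  [set y | enorm (y - x) < t].

Definition borelRn (n : nat) : set (set 'rV[R]_n) :=
  <<s [set B | exists x t, B = eball x t] >>.

(* Lebesgue integral on R^n of a nonnegative function, as the iterated
   Lebesgue integral over the coordinates (Tonelli). *)
Fixpoint iint (n : nat) : ('rV[R]_n -> \bar R) -> \bar R :=
  match n return ('rV[R]_n -> \bar R) -> \bar R with
  | 0 => fun f => f 0
  | m.+1 => fun f =>
      (\int[lebesgue_measure]_t iint (fun y : 'rV[R]_m =>
          f (row_mx (\row_(j < 1) t) y)))%E
  end.

Definition lnull (n : nat) (N : set 'rV[R]_n) : Prop :=
  exists B, borelRn B /\ N `<=` B /\ iint (fun y => (\1_B y)%:E) = 0%E.

Definition borel_fun (n : nat) (f : 'rV[R]_n -> R) : Prop :=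
  forall B : set R, measurable B -> borelRn (f @^-1` B).

Definition leb_measurable (n : nat) (f : 'rV[R]_n -> R) : Prop :=
  exists g N, borel_fun g /\ lnull N /\ (forall x, ~ N x -> f x = g x).

Definition L1loc (n : nat) (f : 'rV[R]_n -> R) : Prop :=
  leb_measurable f /\
  forall x t, 0 < t ->
    (iint (fun y => (\1_(eball x t) y * `|f y|)%:E) < +oo)%E.

Definition Lp (n : nat) (r : R) (f : 'rV[R]_n -> R) : Prop :=
  leb_measurable f /\ (iint (fun y => (`|f y| `^ r)%:E) < +oo)%E.

Definition wolff (n : nat) (beta gamma : R) (f : 'rV[R]_n -> R)
    (x : 'rV[R]_n) : \bar R :=
  (\int[lebesgue_measure]_(t in [set t : R | (0 < t)%R])
     (((iint (fun y => (\1_(eball x t) y * f y)%:E)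
         * ((t `^ (n%:R - beta * gamma))^-1)%:E) `^ (gamma - 1)^-1)
      * (t^-1)%:E))%E.

Definition simeq (n : nat) (f g : 'rV[R]_n -> R) : Prop :=
  exists c R0, 0 < c /\ forall x, R0 < enorm x ->
    c^-1 <= f x / g x <= c.

Definition double_bounded (n : nat) (c : 'rV[R]_n -> R) : Prop :=
  exists C, 0 < C /\ forall x, C^-1 <= c x <= C.

Definition bdd_fun (n : nat) (f : 'rV[R]_n -> R) : Prop :=
  exists M, forall x, `|f x| <= M.

End Defs.

From HB Require Import structures.
From mathcomp Require Import all_boot all_order all_algebra.
From mathcomp Require Import all_classical all_reals all_analysis.
From mathcomp.algebra_tactics Require Import ring lra.
Import Order.TTheory GRing.Theory Num.Theory.
Local Open Scope classical_set_scope.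
Local Open Scope ring_scope.

(* Write u ~= |x|^-theta and s0 = (n - beta gamma) / (gamma - 1).  On the cubes [z, 2z]^n
   the integral of u^r is at least of order z^(n - r theta), so u in L^r for every
   r > n / s0 forces theta >= s0.  Conversely, the weight |y|^sigma1 v^q is bounded below
   by some m > 0 on a fixed unit cube, which lies in B_t(x) for all t >= T ~ |x|; keeping
   only t in [T, 2T] in the Wolff potential gives u(x) >~ m^(1/(gamma-1)) |x|^-s0 off a
   null set.  Comparing with u <~ |x|^-theta at points of arbitrarily large norm forces
   theta <= s0. *)

Lemma ge0_le_integral_nonmeas d (T : measurableType d) (R : realType)
    (mu : {measure set T -> \bar R}) (D : set T) (f g : T -> \bar R) :
  (forall x, D x -> 0 <= f x)%E -> (forall x, D x -> f x <= g x)%E ->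
  (\int[mu]_(x in D) f x <= \int[mu]_(x in D) g x)%E.
Proof.
move=> f0 fg.
have g0 x : D x -> (0 <= g x)%E by move=> Dx; exact: le_trans (f0 x Dx) (fg x Dx).
rewrite (ge0_integralE _ f0) (ge0_integralE _ g0).
apply: ereal_sup_le => _ [h /= hf <-]; exists h => //= x.
apply: le_trans (hf x) _.
by rewrite /patch; case: ifP => // /set_mem Dx; exact: fg.
Qed.

Section Rn.
Variable R : realType.
Set Implicit Arguments. Unset Strict Implicit.

Lemma iint_ge0 (n : nat) (f : 'rV[R]_n -> \bar R) :
  (forall x, 0 <= f x)%E -> (0 <= iint f)%E.
Proof.
elim: n f => [|m IH] f f0 /=; first exact: f0.
by apply: integral_ge0 => t _; apply: IH => y; exact: f0.
Qed.

Lemma le_iint (n : nat) (f g : 'rV[R]_n -> \bar R) :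
  (forall x, 0 <= f x)%E -> (forall x, f x <= g x)%E -> (iint f <= iint g)%E.
Proof.
elim: n f g => [|m IH] f g f0 fg /=; first exact: fg.
apply: ge0_le_integral_nonmeas => t _; first by apply: iint_ge0 => y; exact: f0.
by apply: IH => y; [exact: f0 | exact: fg].
Qed.

Definition cube {n : nat} (a b : R) : set 'rV[R]_n :=
  [set y | forall i, a <= y ord0 i <= b].

Lemma cube_row_mx (m : nat) (a b t : R) (y : 'rV[R]_m) :
  cube a b (row_mx (\row_(j < 1) t) y) <-> a <= t <= b /\ cube a b y.
Proof.
split=> [H | [Ht Hy] i].
  split; first by have := H (lshift m ord0); rewrite row_mxEl mxE.
  by move=> i; have := H (rshift 1 i); rewrite row_mxEr.
rewrite -(splitK i); case: (fintype.split i) => j /=.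
  by rewrite row_mxEl mxE.
by rewrite row_mxEr.
Qed.

Lemma lebesgue_measure_itvcc (a b : R) : a <= b ->
  lebesgue_measure `[a, b]%classic = (b - a)%:E.
Proof.
move=> ab; rewrite lebesgue_measure_itv /= lte_fin.
have [ab' | ba] := ltP a b; first by rewrite EFinB.
suff -> : b = a by rewrite subrr.
by apply/eqP; rewrite eq_le ab ba.
Qed.

Lemma iint_indic_cube (n : nat) (k a b : R) : 0 <= k -> a <= b ->
  iint (fun y : 'rV[R]_n => (k * \1_(cube a b) y)%:E) = (k * (b - a) ^+ n)%:E.
Proof.
elim: n k => [|m IH] k k0 ab /=.
  by rewrite expr0 mulr1 indicE mem_set ?mulr1// => -[].
have sliceE t : (fun y : 'rV[R]_m => (k * \1_(cube a b) (row_mx (\row_(j < 1) t) y))%:E)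
    = (fun y => (k * \1_`[a, b] t * \1_(cube a b) y)%:E).
  apply: funext => y; rewrite !indicE -mulrA; congr (k * _)%:E.
  have [Ht | Ht] := boolp.pselect (a <= t <= b); last first.
    rewrite (memNset (A := `[a, b]%classic)) ?mul0r; last by rewrite /= in_itv.
    by rewrite memNset // => /cube_row_mx [].
  rewrite (mem_set (A := `[a, b]%classic)) ?mul1r; last by rewrite /= in_itv.
  have [Hy | Hy] := boolp.pselect (cube a b y).
    by rewrite !mem_set //; exact/cube_row_mx.
  by rewrite !memNset // => /cube_row_mx [].
under eq_integral => t _ do rewrite sliceE IH ?mulr_ge0// mulrAC.
have := @integralZl_indic _ _ _ lebesgue_measure _ measurableT (fun=> `[a, b]%classic)
  (k * (b - a) ^+ m); rewrite /= => ->//; last first.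
  by rewrite ltNge mulr_ge0 ?exprn_ge0 ?subr_ge0.
rewrite integral_indic// setIT (_ : _ `[a, b]%classic = (b - a)%:E); last first.
  exact: lebesgue_measure_itvcc.
by rewrite -EFinM exprSr mulrA.
Qed.

Lemma iint_ge_cube (n : nat) (f : 'rV[R]_n -> R) (m a b : R) :
  0 <= m -> a <= b -> (forall y, 0 <= f y) -> (forall y, cube a b y -> m <= f y) ->
  ((m * (b - a) ^+ n)%:E <= iint (fun y => (f y)%:E))%E.
Proof.
move=> m0 ab f0 fm; rewrite -iint_indic_cube //.
apply: le_iint => y; first by rewrite lee_fin mulr_ge0 // indicE.
rewrite lee_fin indicE; have [Qy | Qy] := boolp.pselect (cube a b y).
  by rewrite mem_set ?mulr1 //; exact: fm.
by rewrite memNset ?mulr0.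
Qed.

Lemma enorm_ge0 (n : nat) (x : 'rV[R]_n) : 0 <= enorm x.
Proof. exact: sqrtr_ge0. Qed.

Lemma enorm_sqr (n : nat) (x : 'rV[R]_n) : enorm x ^+ 2 = \sum_(i < n) x ord0 i ^+ 2.
Proof. by rewrite sqr_sqrtr // sumr_ge0 // => i _; exact: sqr_ge0. Qed.

Lemma enorm_cube (n : nat) (a b : R) (y : 'rV[R]_n) : (0 < n)%N -> 0 <= a ->
  cube a b y -> a <= enorm y <= n%:R * b.
Proof.
move=> n0 a0 Qy; have /andP[ay0 y0b] := Qy (Ordinal n0).
have sqr_sum_ge0 : 0 <= \sum_(i < n) y ord0 i ^+ 2 by rewrite sumr_ge0 // => i _; exact: sqr_ge0.
apply/andP; split.
  rewrite -(ger0_norm a0) -sqrtr_sqr ler_sqrt // (bigD1 (Ordinal n0)) //=.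
  by apply: ler_wpDr; [rewrite sumr_ge0 // => i _; exact: sqr_ge0 | nra].
have nb0 : 0 <= n%:R * b by rewrite mulr_ge0 //; lra.
rewrite -(ger0_norm nb0) -sqrtr_sqr ler_sqrt ?sqr_ge0 //.
apply: (@le_trans _ _ (\sum_(i < n) b ^+ 2)).
  by apply: ler_sum => i _; have /andP[] := Qy i; nra.
rewrite sumr_const card_ord -mulr_natr.
have n1 : 1 <= n%:R :> R by rewrite ler1n.
nra.
Qed.

Lemma enorm_subr_le (n : nat) (x y : 'rV[R]_n) : enorm (y - x) <= 2 * (enorm y + enorm x).
Proof.
have sqr_le : enorm (y - x) ^+ 2 <= 2 * enorm y ^+ 2 + 2 * enorm x ^+ 2.
  rewrite !enorm_sqr !mulr_sumr -big_split /=; apply: ler_sum => i _.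
  by rewrite !mxE; have := sqr_ge0 (y ord0 i + x ord0 i); rewrite !expr2; nra.
have := enorm_ge0 (y - x); have := enorm_ge0 y; have := enorm_ge0 x; nra.
Qed.

Lemma cube_sub_eball (n : nat) (x : 'rV[R]_n) (a b t : R) : (0 < n)%N -> 0 <= a ->
  2 * (enorm x + n%:R * b) < t -> cube a b `<=` eball x t.
Proof.
move=> n0 a0 ht y /(enorm_cube n0 a0) /andP[_ yb]; rewrite /eball /=.
by apply: le_lt_trans (enorm_subr_le x y) _; lra.
Qed.

Lemma lnull_unbounded (n : nat) (N : set 'rV[R]_n) (L : R) : (0 < n)%N -> lnull N ->
  exists x, ~ N x /\ L <= enorm x.
Proof.
move=> n0 [B [_ [NB B0]]]; pose a := Num.max L 0.
(* N cannot contain the unit cube [a, a + 1]^n, whose measure is 1. *)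
have [a0 La] : 0 <= a /\ L <= a by rewrite !le_max !lexx orbT.
have [[x [Qx Nx]] | cubeN] := boolp.pselect (exists x, cube a (a + 1) x /\ ~ N x).
  exists x; split => //; apply: le_trans La _.
  by have /andP[] := enorm_cube n0 a0 Qx.
suff : ((1 * (a + 1 - a) ^+ n)%:E <= iint (fun y => (\1_B y)%:E))%E.
  by rewrite B0 addrAC subrr add0r expr1n mulr1 lee_fin ler10.
apply: iint_ge_cube => //; first lra.
move=> y Qy; rewrite indicE mem_set //; apply: NB.
by apply: boolp.contrapT => Ny; apply: cubeN; exists y.
Qed.

Lemma ler_powRN (a b th : R) : 0 < a -> a <= b -> 0 <= th -> b `^ (- th) <= a `^ (- th).
Proof.
move=> a0 ab th0; have b0 := lt_le_trans a0 ab.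
rewrite !powRN lef_pV2 ?posrE ?powR_gt0 //.
by apply: ge0_ler_powR => //; rewrite nnegrE ltW.
Qed.

Lemma powR_ge_min (a b z s : R) : 0 < a -> a <= z <= b ->
  Num.min (a `^ s) (b `^ s) <= z `^ s.
Proof.
move=> a0 /andP[az zb]; rewrite ge_min; have [s0 | s0] := leP 0 s.
  by rewrite ge0_ler_powR ?nnegrE ?(ltW a0) ?(ltW (lt_le_trans a0 az)).
apply/orP; right; rewrite -(opprK s) ler_powRN //; first exact: lt_le_trans a0 az.
lra.
Qed.

Lemma powR_bounded_exponent_le0 (k M a : R) : 0 < k ->
  (forall L, exists2 z, L <= z & k * z `^ a <= M) -> a <= 0.
Proof.
move=> k0 bounded; rewrite leNgt; apply/negP => a0.
pose L := Num.max 1 ((`|M| / k + 1) `^ a^-1).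
have [L1 LM] : 1 <= L /\ (`|M| / k + 1) `^ a^-1 <= L by rewrite !le_max !lexx orbT.
have [z Lz] := bounded L; apply/negP; rewrite -ltNge.
have Mk0 : 0 <= `|M| / k + 1 by rewrite addr_ge0 ?divr_ge0 // ltW.
have : `|M| / k + 1 <= z `^ a.
  have -> : `|M| / k + 1 = ((`|M| / k + 1) `^ a^-1) `^ a.
    by rewrite -powRrM mulVf ?gt_eqF // powRr1.
  have z0 : 0 <= z by apply: le_trans Lz; apply: le_trans L1.
  by rewrite ge0_ler_powR ?nnegrE ?powR_ge0 ?(ltW a0) ?z0 ?(le_trans LM Lz).
rewrite -(ler_pM2l k0) mulrDr mulrCA divff ?gt_eqF // mulr1 mulr1.
by move=> h; apply: lt_le_trans h; have := ler_norm M; lra.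
Qed.

Lemma decay_exponent_le (n : nat) (u : 'rV[R]_n -> R) (N : set 'rV[R]_n)
    (c k R0 R1 theta s : R) : (0 < n)%N -> lnull N -> 0 < k ->
  (forall x, R0 < enorm x -> u x <= c * enorm x `^ (- theta)) ->
  (forall x, ~ N x -> R1 <= enorm x -> k * enorm x `^ (- s) <= u x) ->
  theta <= s.
Proof.
move=> n0 nullN k0 u_ub u_lb; rewrite -subr_le0.
apply: (@powR_bounded_exponent_le0 k c _ k0) => L.
pose L' := Num.max L (Num.max (R0 + 1) (Num.max R1 1)).
have [LL' R0L' R1L' L'1] : [/\ L <= L', R0 + 1 <= L', R1 <= L' & 1 <= L'].
  by rewrite !le_max !lexx !orbT.
have [x [Nx xL']] := lnull_unbounded L' n0 nullN.
have x0 : 0 < enorm x by apply: lt_le_trans xL'; lra.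
exists (enorm x); first exact: le_trans xL'.
have X0 : enorm x != 0 by rewrite gt_eqF.
have Xs : enorm x `^ (- s) * enorm x `^ theta = enorm x `^ (theta - s).
  by rewrite -powRD ?X0 ?implybT // addrC.
have Xt : enorm x `^ (- theta) * enorm x `^ theta = 1.
  by rewrite -powRD ?X0 ?implybT // addNr powRr0.
rewrite -Xs -[c]mulr1 -Xt !mulrA ler_pM2r ?powR_gt0 //.
by apply: le_trans (u_lb x Nx (le_trans R1L' xL')) (u_ub x _); apply: lt_le_trans xL'; lra.
Qed.

Lemma Lp_decay_exponent (n : nat) (u : 'rV[R]_n -> R) (c R0 theta r : R) :
  (0 < n)%N -> 0 < c -> 0 <= theta -> 0 < r ->
  (forall x, R0 < enorm x -> c * enorm x `^ (- theta) <= u x) ->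
  Lp r u -> n%:R <= r * theta.
Proof.
move=> n0 c0 th0 r0 u_lb [_ u_fin].
have [M IM] : exists M, iint (fun y => (`|u y| `^ r)%:E) = M%:E.
  exists (fine (iint (fun y => (`|u y| `^ r)%:E))); rewrite fineK // ge0_fin_numE //.
  by apply: iint_ge0 => y; rewrite lee_fin powR_ge0.
pose k := (c * (2 * n%:R) `^ (- theta)) `^ r.
have n2 : 0 < 2 * n%:R :> R by rewrite mulr_gt0 // ltr0n.
have k0 : 0 < k by rewrite powR_gt0 // mulr_gt0 // powR_gt0.
rewrite -subr_le0; apply: (@powR_bounded_exponent_le0 k M _ k0) => L.
pose z := Num.max L (Num.max R0 0 + 1).
have [Lz R0z z0] : [/\ L <= z, R0 < z & 0 < z].
  have : R0 <= Num.max R0 0 /\ 0 <= Num.max R0 0 by rewrite !le_max !lexx orbT.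
  have : L <= z /\ Num.max R0 0 + 1 <= z by rewrite !le_max !lexx orbT.
  by split; lra.
exists z => //.
have bound_cube : (c * (n%:R * (2 * z)) `^ (- theta)) `^ r * z ^+ n <= M.
  rewrite -lee_fin -IM (_ : z ^+ n = (2 * z - z) ^+ n); last by congr (_ ^+ n); ring.
  apply: iint_ge_cube => [||y|y Qy]; rewrite ?powR_ge0 //; first lra.
  have /andP[zy yz] := enorm_cube n0 (ltW z0) Qy.
  have y0 : 0 < enorm y := lt_le_trans z0 zy.
  have uy := u_lb y (lt_le_trans R0z zy).
  rewrite ger0_norm; last by apply: le_trans uy; rewrite mulr_ge0 ?powR_ge0 ?ltW.
  rewrite ge0_ler_powR ?nnegrE ?mulr_ge0 ?powR_ge0 ?(ltW c0) ?(ltW r0) //.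
    by apply: le_trans uy; rewrite mulr_ge0 ?powR_ge0 ?ltW.
  by apply: le_trans uy; rewrite ler_pM2l //; exact: ler_powRN.
apply: le_trans bound_cube; rewrite le_eqVlt; apply/orP; left; apply/eqP.
rewrite (_ : n%:R * (2 * z) = 2 * n%:R * z); last by ring.
rewrite (powRM _ (ltW n2) (ltW z0)) mulrA.
rewrite (powRM _ (mulr_ge0 (ltW c0) (powR_ge0 _ _)) (powR_ge0 _ _)) -/k.
rewrite -powRrM -powR_mulrn ?(ltW z0) // -mulrA -powRD; last by rewrite (gt_eqF z0) implybT.
by congr (_ * z `^ _); ring.
Qed.

Lemma Lp_optimal_decay_exponent (n : nat) (u : 'rV[R]_n -> R) (c R0 theta rho : R) :
  (0 < n)%N -> 0 < c -> 0 < theta -> 0 < rho ->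
  (forall x, R0 < enorm x -> c * enorm x `^ (- theta) <= u x) ->
  (forall r, rho < r -> Lp r u) -> n%:R / rho <= theta.
Proof.
move=> n0 c0 th0 rho0 u_lb u_Lp; rewrite leNgt; apply/negP => th_lt.
have rho_th : rho * theta < n%:R by rewrite mulrC -ltr_pdivlMr.
pose w := n%:R / theta.
have w_th : w * theta = n%:R by rewrite divfK ?gt_eqF.
pose r := (rho + w) / 2.
have rho_r : rho < r by rewrite /r; nra.
have := Lp_decay_exponent n0 c0 (ltW th0) (lt_trans rho0 rho_r) u_lb (u_Lp r rho_r).
rewrite /r; nra.
Qed.

Lemma powR_div_powR (m z s e : R) : 0 <= m -> 0 <= z ->
  (m / z `^ s) `^ e = m `^ e * z `^ (- (s * e)).
Proof.
move=> m0 z0; rewrite powRM ?invr_ge0 ?powR_ge0 //.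
by rewrite -powRN -powRrM mulNr.
Qed.

Lemma wolff_ge (n : nat) (beta gamma : R) (f : 'rV[R]_n -> R) (x : 'rV[R]_n) (m T : R) :
  1 < gamma -> beta * gamma <= n%:R -> 0 < m -> 0 < T ->
  (forall t, T <= t -> (m%:E <= iint (fun y => (\1_(eball x t) y * f y)%:E))%E) ->
  (((m / (2 * T) `^ (n%:R - beta * gamma)) `^ (gamma - 1)^-1 / 2)%:E
     <= wolff beta gamma f x)%E.
Proof.
move=> g1 bgn m0 T0 ball_ge; set sg := n%:R - beta * gamma; set e := (gamma - 1)^-1.
(* K bounds the integrand from below on [T, 2T]; the rest of the t-integral is dropped. *)
pose K := (m / (2 * T) `^ sg) `^ e / (2 * T).
have T2 : 0 < 2 * T by rewrite mulr_gt0.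
have sg0 : 0 <= sg by rewrite subr_ge0.
have K0 : 0 <= K by rewrite divr_ge0 ?powR_ge0 // ltW.
have -> : (m / (2 * T) `^ sg) `^ e / 2 = K * (2 * T - T).
  by rewrite /K; field; rewrite gt_eqF.
rewrite /wolff (_ : [set t : R | 0 < t] = (`]0%R, +oo[%classic : set R)); last first.
  by apply/seteqP; split => t /=; rewrite in_itv /= andbT.
have int_K : (\int[lebesgue_measure]_(t in (`]0%R, +oo[%classic : set R))
    (K * \1_`[T, 2 * T] t)%:E)%E = (K * (2 * T - T))%:E.
  have := @integralZl_indic _ _ _ lebesgue_measure _ (measurable_itv `]0%R, +oo[)
    (fun=> `[T, 2 * T]%classic) K; rewrite /= => -> //; last by rewrite ltNge K0.
  rewrite integral_indic //= setIidl; last by move=> t /=; rewrite !in_itv /= andbT => /andP[Tt _]; lra.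
  rewrite (_ : _ `[T, 2 * T]%classic = (2 * T - T)%:E) //.
  by apply: lebesgue_measure_itvcc; lra.
rewrite -int_K.
apply: ge0_le_integral_nonmeas => t; first by rewrite lee_fin mulr_ge0 // indicE.
rewrite /= in_itv /= andbT => t0; rewrite indicE.
have [/andP[Tt t2T] | Tt] := boolp.pselect (T <= t <= 2 * T); last first.
  rewrite memNset ?mulr0; last by rewrite /= in_itv.
  by rewrite mule_ge0 ?poweR_ge0 // lee_fin invr_ge0 ltW.
rewrite mem_set ?mulr1 /K ?EFinM; last by rewrite /= in_itv /= Tt t2T.
apply: lee_pmul.
- by rewrite lee_fin powR_ge0.
- by rewrite lee_fin invr_ge0 ltW.
- rewrite -poweR_EFin; apply: gt0_ler_poweR.
  + by rewrite invr_ge0 subr_ge0 ltW.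
  + by rewrite in_itv /= leey andbT lee_fin divr_ge0 ?powR_ge0 // ltW.
  + rewrite in_itv /= leey andbT mule_ge0 ?lee_fin ?invr_ge0 ?powR_ge0 //.
    exact: le_trans (ltW (lte_tofin m0)) (ball_ge t Tt).
  rewrite EFinM; apply: lee_pmul; rewrite ?lee_fin ?invr_ge0 ?powR_ge0 ?(ltW m0) //.
    exact: ball_ge.
  rewrite lef_pV2 ?posrE ?powR_gt0 //.
  by rewrite ge0_ler_powR ?nnegrE ?(ltW t0) ?(ltW T2).
- by rewrite lee_fin lef_pV2 ?posrE.
Qed.

Lemma wolff_decay_lower (n : nat) (beta gamma : R) (f : 'rV[R]_n -> R) (m a : R) :
  (0 < n)%N -> 1 < gamma -> beta * gamma <= n%:R -> 0 < m -> 0 <= a ->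
  (forall y, 0 <= f y) -> (forall y, cube a (a + 1) y -> m <= f y) ->
  exists2 k, 0 < k & forall x, 1 <= enorm x ->
    ((k * enorm x `^ (- ((n%:R - beta * gamma) / (gamma - 1))))%:E
       <= wolff beta gamma f x)%E.
Proof.
move=> n0 g1 bgn m0 a0 f0 f_cube.
set sg := n%:R - beta * gamma; set e := (gamma - 1)^-1.
have sg0 : 0 <= sg by rewrite subr_ge0.
have e0 : 0 <= e by rewrite invr_ge0 subr_ge0 ltW.
have na0 : 0 <= n%:R * (a + 1) by rewrite mulr_ge0 //; lra.
(* D is chosen so that T <= D |x| as soon as 1 <= |x|. *)
pose D := 2 * (1 + n%:R * (a + 1)) + 1.
have D0 : 0 < D by rewrite /D; lra.
have D2 : 0 < 2 * D by rewrite mulr_gt0.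
exists (m `^ e * (2 * D) `^ (- (sg * e)) / 2).
  by rewrite divr_gt0 // mulr_gt0 // powR_gt0.
move=> x x1; pose T := 2 * (enorm x + n%:R * (a + 1)) + 1.
have T0 : 0 < T by rewrite /T; lra.
have ball_ge t : T <= t -> (m%:E <= iint (fun y => (\1_(eball x t) y * f y)%:E))%E.
  move=> Tt; have := iint_ge_cube (f := fun y => \1_(eball x t) y * f y) (ltW m0)
    (ler_wpDr ler01 (lexx a)); rewrite addrAC subrr add0r expr1n mulr1; apply.
    by move=> y; rewrite mulr_ge0 ?indicE.
  move=> y Qy; rewrite indicE mem_set ?mul1r; first exact: f_cube.
  by apply: (cube_sub_eball n0 a0 _ Qy); rewrite /T in Tt; lra.
apply: le_trans (wolff_ge g1 bgn m0 T0 ball_ge); rewrite lee_fin.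
have x0 : 0 < enorm x by lra.
have -> : m `^ e * (2 * D) `^ (- (sg * e)) / 2 * enorm x `^ (- (sg * e))
    = (m / (2 * D * enorm x) `^ sg) `^ e / 2.
  rewrite powR_div_powR ?(ltW m0) ?mulr_ge0 ?(ltW D0) ?(ltW x0) //.
  by rewrite (powRM _ (ltW D2) (ltW x0)); ring.
rewrite ler_pM2r ?invr_gt0 // ge0_ler_powR ?nnegrE ?divr_ge0 ?powR_ge0 ?(ltW m0) //.
rewrite ler_pM2l // lef_pV2 ?posrE ?powR_gt0 ?mulr_gt0 //.
rewrite ge0_ler_powR ?nnegrE ?subr_ge0 ?mulr_ge0 ?(ltW D0) ?(ltW x0) ?(ltW T0) //.
by rewrite -mulrA ler_pM2l // /T /D; nra.
Qed.

Lemma weight_ge_on_cube (n : nat) (v : 'rV[R]_n -> R) (sigma q c R0 theta : R) :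
  (0 < n)%N -> 0 <= q -> 0 < c -> 0 <= theta ->
  (forall y, R0 < enorm y -> c * enorm y `^ (- theta) <= v y) ->
  exists2 m, 0 < m & exists2 a, 0 <= a &
    forall y, cube a (a + 1) y -> m <= enorm y `^ sigma * v y `^ q.
Proof.
move=> n0 q0 c0 th0 v_lb.
pose a := Num.max R0 0 + 1; pose b := n%:R * (a + 1).
have [R0a a1] : R0 < a /\ 1 <= a.
  have : R0 <= Num.max R0 0 /\ 0 <= Num.max R0 0 by rewrite !le_max !lexx orbT.
  by rewrite /a; lra.
have ab : a <= b.
  have n1 : 1 <= n%:R :> R by rewrite ler1n.
  by rewrite /b; nra.
have cb0 : 0 < c * b `^ (- theta) by rewrite mulr_gt0 // powR_gt0 //; lra.
exists (Num.min (a `^ sigma) (b `^ sigma) * (c * b `^ (- theta)) `^ q).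
  by rewrite mulr_gt0 ?powR_gt0 // lt_min !powR_gt0 //; lra.
exists a; first lra.
move=> y Qy; have /andP[ay yb] := enorm_cube n0 (ltW (lt_le_trans ltr01 a1)) Qy.
have y0 : 0 < enorm y by lra.
have vy : c * b `^ (- theta) <= v y.
  apply: le_trans (v_lb y (lt_le_trans R0a ay)); rewrite ler_pM2l //; exact: ler_powRN.
apply: ler_pM; rewrite ?powR_ge0 ?le_min ?powR_ge0 //.
  by apply: powR_ge_min; rewrite ?ay //; lra.
by rewrite ge0_ler_powR ?nnegrE ?(ltW cb0) ?(le_trans (ltW cb0) vy).
Qed.

Lemma simeq_powRN_bounds (n : nat) (u : 'rV[R]_n -> R) (theta : R) :
  simeq u (fun x => enorm x `^ (- theta)) ->
  exists2 c, 0 < c & exists R0, forall x, R0 < enorm x ->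
    c^-1 * enorm x `^ (- theta) <= u x /\ u x <= c * enorm x `^ (- theta).
Proof.
move=> [c [R0 [c0 u_sim]]]; exists c => //; exists (Num.max R0 0) => x.
rewrite gt_max => /andP[R0x x0]; have /andP[lb ub] := u_sim x R0x.
have g0 := powR_gt0 (- theta) x0.
by move: lb ub; rewrite ler_pdivlMr // ler_pdivrMr.
Qed.

End Rn.

Theorem proposition5 (R : realType) (n : nat) (beta gamma p q sigma1 sigma2 : R)
  (c1 c2 u v : 'rV[R]_n -> R) :
  (3 <= n)%N ->
  0 < beta -> 1 < gamma -> beta * gamma < n%:R ->
  0 < p -> 0 < q -> p <= q -> (gamma - 1) ^+ 2 < p * q ->
  - (beta * gamma) < sigma1 -> - (beta * gamma) < sigma2 -> sigma1 <= sigma2 ->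
  (let q0 := (beta * gamma * (gamma - 1 + q) + (gamma - 1) * sigma1 + sigma2 * q)
             / (p * q - (gamma - 1) ^+ 2) in
   let p0 := (beta * gamma * (gamma - 1 + p) + (gamma - 1) * sigma2 + sigma1 * p)
             / (p * q - (gamma - 1) ^+ 2) in
   q0 + p0 <= (n%:R - beta * gamma) / (gamma - 1)) ->
  double_bounded c1 -> double_bounded c2 ->
  (* (u, v) is a positive solution *)
  L1loc u -> L1loc v ->
  (forall x, 0 < u x) -> (forall x, 0 < v x) ->
  (exists N, lnull N /\ forall x, ~ N x ->
     (u x)%:E = ((c1 x)%:E
        * wolff beta gamma (fun y => (enorm y `^ sigma1 * v y `^ q)%R) x)%E) ->
  (exists N, lnull N /\ forall x, ~ N x ->
     (v x)%:E = ((c2 x)%:E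
        * wolff beta gamma (fun y => (enorm y `^ sigma2 * u y `^ p)%R) x)%E) ->
  bdd_fun u -> bdd_fun v ->
  (exists theta1 theta2, 0 < theta1 /\ 0 < theta2 /\
     simeq u (fun x => enorm x `^ (- theta1)) /\
     simeq v (fun x => enorm x `^ (- theta2))) ->
  (* optimal integrable *)
  (forall r, n%:R * (gamma - 1) / (n%:R - beta * gamma) < r -> Lp r u) ->
  (forall s, Num.max (n%:R * (gamma - 1) / (n%:R - beta * gamma))
                     (n%:R * (gamma - 1) /
                        (p * ((n%:R - beta * gamma) / (gamma - 1))
                         - (beta * gamma + sigma2))) < s -> Lp s v) ->
  simeq u (fun x => enorm x `^ (- ((n%:R - beta * gamma) / (gamma - 1)))).
Proof.
move=> n3 _ g1 bgn _ q0 _ _ _ _ _ _ [C [C0 c1_bd]] _ _ _ _ _ [N [Nnull uW]] _ _ _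
  [th1 [th2 [th10 [th20 [u_sim v_sim]]]]] u_Lp _.
have n0 : (0 < n)%N by apply: leq_trans n3.
have [cu cu0 [Ru u_bd]] := simeq_powRN_bounds u_sim.
have [cv cv0 [Rv v_bd]] := simeq_powRN_bounds v_sim.
have [cuV cvV CV] : [/\ 0 < cu^-1, 0 < cv^-1 & 0 < C^-1] by rewrite !invr_gt0.
suff -> : (n%:R - beta * gamma) / (gamma - 1) = th1 by [].
apply/eqP; rewrite eq_le; apply/andP; split.
  have rho0 : 0 < n%:R * (gamma - 1) / (n%:R - beta * gamma).
    by rewrite !mulr_gt0 ?invr_gt0 ?subr_gt0 ?ltr0n.
  have := Lp_optimal_decay_exponent n0 cuV th10 rho0 (fun x Rx => (u_bd x Rx).1) u_Lp.
  have [nR0 g0 sg0] : [/\ n%:R != 0 :> R, gamma - 1 != 0 & n%:R - beta * gamma != 0].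
    by rewrite pnatr_eq0 -lt0n n0 !subr_eq0 !gt_eqF.
  rewrite (_ : n%:R / _ = (n%:R - beta * gamma) / (gamma - 1)) //.
  by field; rewrite nR0 g0 sg0.
have [m m0 [a a0 f_cube]] := weight_ge_on_cube sigma1 n0 (ltW q0) cvV (ltW th20)
  (fun y Ry => (v_bd y Ry).1).
have f0 y : 0 <= enorm y `^ sigma1 * v y `^ q by rewrite mulr_ge0 ?powR_ge0.
have [k k0 W_lb] := wolff_decay_lower n0 g1 (ltW bgn) m0 a0 f0 f_cube.
have u_lb x : ~ N x -> 1 <= enorm x ->
    C^-1 * k * enorm x `^ (- ((n%:R - beta * gamma) / (gamma - 1))) <= u x.
  move=> Nx x1; rewrite -lee_fin (uW x Nx) -mulrA EFinM.
  apply: lee_pmul; rewrite ?lee_fin ?invr_ge0 ?mulr_ge0 ?powR_ge0 ?(ltW C0) ?(ltW k0) //.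
    by have /andP[] := c1_bd x.
  exact: W_lb.
exact: decay_exponent_le n0 Nnull (mulr_gt0 CV k0) (fun x Rx => (u_bd x Rx).2) u_lb.
Qed.
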